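(* If $K\subset\mathbb{X}$ is compact, then $\eta(K)=0$ if and only if $\lim_{\varepsilon\to0}\tau(B_\varepsilon(K))=0$.
   Context: $\mathbb{X}$ is a compact metric space. $(\xi_j)_{j\in\mathbb N}$ is a sequence of finitely additive outer probabilities on $\mathbb{X}$ (set functions on all subsets, values in $[0,1]$, finitely additive, $\xi_j(\mathbb{X})=1$). For $A\subset\mathbb{X}$, $\tau(A)=\limsup_{n\to\infty}\frac1n\sum_{j=0}^{n-1}\xi_j(A)$. For $Y\subset\mathbb{X}$ and $r>0$, $\nu_r(Y)=\inf\sum_{I\in\mathcal I}\tau(I)$ over all countable covers $\mathcal I$ of $Y$ by open sets of diameter at most $r$; $\nu(Y)=\sup_{r>0}\nu_r(Y)$; $\eta$ is the restriction of $\nu$ to the Borel $\sigma$-algebra (a countably additive Borel measure). $B_\varepsilon(K)$ is the open $\varepsilon$-neighborhood of $K$. *)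

From HB Require Import structures.
From mathcomp Require Import all_boot all_order all_algebra.
From mathcomp Require Import all_classical all_reals all_analysis.
Set Implicit Arguments. Unset Strict Implicit. Unset Printing Implicit Defensive.
Import Order.TTheory GRing.Theory Num.Theory.
Local Open Scope classical_set_scope.
Local Open Scope ring_scope.

Section defs.
Context {R : realType} {X : metricType R}.

Definition fa_outer_prob_seq (xi : nat -> set X -> R) : Prop :=
  (forall j A, 0 <= xi j A <= 1) /\
  (forall j, xi j setT = 1) /\
  (forall j A B, A `&` B = set0 -> xi j (A `|` B) = xi j A + xi j B).

Definition tau (xi : nat -> set X -> R) (A : set X) : \bar R :=
  limn_esup (fun n : nat => ((n%:R)^-1 * \sum_(j < n) xi j A)%:E).

Definition diam_le (A : set X) (r : R) : Prop :=
  forall x y, A x -> A y -> mdist x y <= r.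

(* nu_r(Y): infimum over countable covers of Y by open sets of diameter <= r
   (finite covers are included by padding with the empty set) *)
Definition nu_r (xi : nat -> set X -> R) (r : R) (Y : set X) : \bar R :=
  ereal_inf [set (\sum_(i <oo) tau xi (I i))%E | I in
    [set I : nat -> set X | (forall i, open (I i) /\ diam_le (I i) r) /\
                            Y `<=` \bigcup_i I i]].

Definition nu (xi : nat -> set X -> R) (Y : set X) : \bar R :=
  ereal_sup [set nu_r xi r Y | r in [set r : R | 0 < r]].

(* eta: restriction of nu to Borel sets; we only evaluate it on Borel sets *)
Definition eta_restr (xi : nat -> set X -> R) (A : set X) : \bar R := nu xi A.

Definition Beps (K : set X) (eps : R) : set X :=
  [set y | exists2 x, K x & mdist x y < eps].
End defs.

(* If nu(K) = 0, then for every e > 0 some countable cover of K by open sets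
   has total tau below e.  By compactness finitely many of these sets cover K,
   and their union U contains B_eps(K) for all small eps (a compact set lies
   at positive distance from the complement of an open neighbourhood), so
   tau(B_eps(K)) <= tau(U) < e by finite subadditivity of tau, which tau
   inherits from the xi_j through the limsup.
   Conversely, given r > 0, cover K by n balls of radius r/2.  Their traces on
   B_eps(K) still cover K, are open, have diameter at most r, and each has
   tau at most tau(B_eps(K)), which is eventually below e/(n+1); hence
   nu_r(K) <= e for every e > 0. *)

From HB Require Import structures.
From mathcomp Require Import all_boot all_order all_algebra.
From mathcomp Require Import all_classical all_reals all_analysis.
Import Order.TTheory GRing.Theory Num.Theory.
Local Open Scope classical_set_scope.
Local Open Scope ring_scope.

Section limn_esup_bounds.
Context {R : realType}.
Implicit Types u v : (\bar R)^nat.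
Local Open Scope ereal_scope.

Lemma limn_esup_le u c : (forall n, u n <= c) -> limn_esup u <= c.
Proof.
move=> uc; apply: le_trans (ereal_inf_lbound _) _.
  by exists setT => //; exact: filterT.
by apply: ge_ereal_sup => _ [n _ <-].
Qed.

Lemma le_limn_esup u v : (forall n, u n <= v n) -> limn_esup u <= limn_esup v.
Proof.
move=> uv; apply: le_ereal_inf_tmp => _ [V FV <-].
apply: le_trans (ereal_inf_lbound _) _; first by exists V.
apply: ge_ereal_sup => _ [n Vn <-]; apply: le_trans (uv n) _.
by apply: ereal_sup_ubound; exists n.
Qed.

Lemma limn_esup_ge0 u : (forall n, 0 <= u n) -> 0 <= limn_esup u.
Proof. exact: limf_esup_ge0. Qed.

Lemma limn_esupD_le u v :
  limn_esup u \is a fin_num -> limn_esup v \is a fin_num ->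
  limn_esup (u \+ v) <= limn_esup u + limn_esup v.
Proof.
move=> uf vf; apply/lee_addgt0Pr => e e0.
have e2 : (0 < e / 2)%R by rewrite divr_gt0.
have /ereal_inf_lt[_ [V FV <-] Vu] : limn_esup u < limn_esup u + (e / 2)%:E.
  by rewrite lteDl // lte_fin.
have /ereal_inf_lt[_ [W FW <-] Wv] : limn_esup v < limn_esup v + (e / 2)%:E.
  by rewrite lteDl // lte_fin.
apply: le_trans (ereal_inf_lbound _) _.
  by exists (V `&` W) => //; exact: filterI.
apply: ge_ereal_sup => _ [n [Vn Wn] <-].
apply: le_trans (_ : ereal_sup (u @` V) + ereal_sup (v @` W) <= _).
  by apply: leeD; apply: ereal_sup_ubound; exists n.
apply: le_trans (leeD (ltW Vu) (ltW Wv)) _.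
by rewrite addeACA -EFinD -splitr.
Qed.

End limn_esup_bounds.

Section upper_density.
Context {R : realType} {X : metricType R} {xi : nat -> set X -> R}.
Hypothesis xiP : fa_outer_prob_seq xi.

Lemma xi_ge0 j A : 0 <= xi j A.
Proof. by case: xiP => /(_ j A)/andP[]. Qed.

Lemma xi_le1 j A : xi j A <= 1.
Proof. by case: xiP => /(_ j A)/andP[]. Qed.

Let xiU j {A B} : A `&` B = set0 -> xi j (A `|` B) = xi j A + xi j B.
Proof. by case: xiP => _ [_]; apply. Qed.

Lemma xi0 j : xi j set0 = 0.
Proof. by apply: (addrI (xi j set0)); rewrite -xiU ?setI0// setU0 addr0. Qed.

Lemma le_xi j {A B} : A `<=` B -> xi j A <= xi j B.
Proof. by move=> AB; rewrite -(setDUK AB) xiU ?setDIK // lerDl xi_ge0. Qed.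

Lemma xi_setU_le j A B : xi j (A `|` B) <= xi j A + xi j B.
Proof.
rewrite -[in xi j _](setDUK (@subsetUl _ A B)) xiU ?setDIK// lerD2l.
by apply: le_xi => x [[]].
Qed.

Local Open Scope ereal_scope.

Let avg A n : \bar R := ((n%:R)^-1 * \sum_(j < n) xi j A)%:E.

Let avg_ge0 A n : 0 <= avg A n.
Proof.
by rewrite lee_fin mulr_ge0 ?invr_ge0 ?sumr_ge0// => j _; exact: xi_ge0.
Qed.

Let avg_le1 A n : avg A n <= 1.
Proof.
rewrite lee_fin; case: n => [|n]; first by rewrite big_ord0 mulr0.
rewrite mulrC ler_pdivrMr ?ltr0Sn// mul1r.
by apply: le_trans (_ : \sum_(j < n.+1) 1 <= _)%R;
  [apply: ler_sum => j _; exact: xi_le1|rewrite sumr_const card_ord].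
Qed.

Lemma tau_ge0 A : 0 <= tau xi A.
Proof. exact/limn_esup_ge0/avg_ge0. Qed.

Lemma tau_le1 A : tau xi A <= 1.
Proof. exact/limn_esup_le/avg_le1. Qed.

Lemma tau_fin_num A : tau xi A \is a fin_num.
Proof. by rewrite ge0_fin_numE ?tau_ge0// (le_lt_trans (tau_le1 A)) ?ltry. Qed.

Lemma le_tau {A B} : A `<=` B -> tau xi A <= tau xi B.
Proof.
move=> AB; apply: le_limn_esup => n; rewrite lee_fin.
by rewrite ler_wpM2l ?invr_ge0// ler_sum// => j _; exact: le_xi.
Qed.

Lemma tau0 : tau xi set0 = 0.
Proof.
apply/eqP; rewrite eq_le tau_ge0 andbT; apply: limn_esup_le => n.
by rewrite lee_fin big1 ?mulr0// => j _; exact: xi0.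
Qed.

Lemma tau_setU_le A B : tau xi (A `|` B) <= tau xi A + tau xi B.
Proof.
have := @limn_esupD_le _ (avg A) (avg B) (tau_fin_num A) (tau_fin_num B).
apply: le_trans.
apply: le_limn_esup => n; rewrite /= -EFinD lee_fin -mulrDr -big_split /=.
by rewrite ler_wpM2l ?invr_ge0// ler_sum// => j _; exact: xi_setU_le.
Qed.

Lemma tau_bigcup_le (I : nat -> set X) N :
  tau xi (\bigcup_(i < N) I i) <= \sum_(i < N) tau xi (I i).
Proof.
rewrite bigcup_mkord; elim: N => [|N IH]; first by rewrite !big_ord0 tau0.
by rewrite !big_ord_recr /=; apply: le_trans (tau_setU_le _ _) (leeD IH _).
Qed.

End upper_density.

Section compact_covers.
Context {T : topologicalType}.

Lemma compact_finite_subcover {I : eqType} {K : set T} {f : I -> set T} :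
  compact K -> (forall i, open (f i)) -> K `<=` \bigcup_i f i ->
  exists s : seq I, K `<=` \bigcup_(i in [set` s]) f i.
Proof.
move=> /compact_near_coveringP cK fo Kf.
pose F := filter_from [set: seq I]
  (fun s0 : seq I => [set s : seq I | {subset s0 <= s}]).
have FF : Filter F.
  apply: filter_from_filter; first by exists [::].
  move=> s1 s2 _ _; exists (s1 ++ s2) => // s /= s12.
  by split=> i i_s; apply: s12; rewrite mem_cat i_s ?orbT.
have : \forall s \near F, K `<=` \bigcup_(i in [set` s]) f i.
  apply: cK => x /Kf[i _ fi_x]; exists (f i, [set s | {subset [:: i] <= s}]).
    by split=> /=; [apply: open_nbhs_nbhs; split|exists [:: i]].
  by case=> y s /= [fiy si]; exists i => //; apply: si; rewrite inE.
by case=> s _ /(_ s (fun _ => id)) Ks; exists s.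
Qed.

Lemma compact_prefix_cover {K : set T} {f : nat -> set T} :
  compact K -> (forall i, open (f i)) -> K `<=` \bigcup_i f i ->
  exists N, K `<=` \bigcup_(i < N) f i.
Proof.
move=> cK fo /(compact_finite_subcover cK fo)[s Ks].
exists (\max_(i <- s) i.+1) => x /Ks[i si fi_x]; exists i => //=.
exact: (@leq_bigmax_seq _ _ xpredT).
Qed.

End compact_covers.

Section metric_neighbourhoods.
Context {R : realType} {X : metricType R}.
Implicit Types (K U : set X) (x c : X) (e r : R).

Lemma open_ball x e : open (ball x e).
Proof.
rewrite openE => y; rewrite ballEmdist /= => xy; apply/nbhs_ballP.
exists (e - mdist x y); first by rewrite /= subr_gt0.
move=> z; rewrite ballEmdist /= => yz.
by rewrite (le_lt_trans (metric_triangle x y z))// -ltrBrDl.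
Qed.

Lemma Beps_bigcup K e : Beps K e = \bigcup_(x in K) ball x e.
Proof. by under eq_bigcupr do rewrite ballEmdist. Qed.

Lemma open_Beps K e : open (Beps K e).
Proof. by rewrite Beps_bigcup; apply: bigcup_open => x _; exact: open_ball. Qed.

Lemma diam_le_ball c r : diam_le (ball c (r / 2)) r.
Proof.
move=> x y; rewrite !ballEmdist /= metric_sym => cx cy.
by rewrite ltW// (le_lt_trans (metric_triangle x c y))// [r]splitr ltrD.
Qed.

Lemma near_Beps_subset {K U} : compact K -> open U -> K `<=` U ->
  \forall e \near 0^'+, Beps K e `<=` U.
Proof.
move=> /compact_near_coveringP cK Uo KU.
have : \forall e \near 0^'+, K `<=` (fun x => ball x e `<=` U).
  apply: cK => x /KU Ux.
  have /nbhs_ballP[d d0 xdU] : nbhs x U by exact: open_nbhs_nbhs.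
  have d2 : 0 < d / 2 by rewrite divr_gt0.
  exists (ball x (d / 2), [set e | e < d / 2]).
    by split; [exact: nbhsx_ballx|exact: nbhs_right_lt].
  case=> y e /= [xy ed] z yz; apply: xdU.
  by apply: le_ball (ball_triangle xy yz); rewrite [leRHS]splitr lerD2l ltW.
by apply: filterS => e KU' y [x Kx xy]; apply: (KU' x Kx); rewrite ballEmdist.
Qed.

Lemma compact_ball_net {K r} : compact K -> 0 < r ->
  exists s : seq X, K `<=` \bigcup_(c in [set` s]) ball c r.
Proof.
move=> cK r0; apply: compact_finite_subcover cK (fun c => open_ball c r) _.
by move=> x _; exists x => //; exact: ballxx.
Qed.

End metric_neighbourhoods.

Section nneg_cvg.
Context {R : realType} {T : Type} {F : set_system T} {FF : Filter F}.
Local Open Scope ereal_scope.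

Lemma nneg_cvge0P (f : T -> \bar R) : (forall t, 0 <= f t) ->
  f @ F --> 0 <-> forall e : R, (0 < e)%R -> \forall t \near F, f t <= e%:E.
Proof.
move=> f0; split.
- move=> /fine_cvgP[ffin /cvgrPdist_le fcvg] e e0.
  near=> t; rewrite -(@fineK _ (f t)) ?lee_fin; last by near: t.
  rewrite -[leLHS]ger0_norm ?fine_ge0// -normrN -sub0r.
  by near: t; exact: fcvg.
- move=> fe; apply/fine_cvgP; split.
    near=> t; rewrite ge0_fin_numE// (le_lt_trans _ (ltry 1))//.
    by near: t; exact: fe.
  apply/cvgrPdist_le => e e0; near=> t.
  rewrite sub0r normrN ger0_norm ?fine_ge0// -lee_fin fineK; last first.
    by rewrite ge0_fin_numE// (le_lt_trans _ (ltry e))//; near: t; exact: fe.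
  by near: t; exact: fe.
Unshelve. all: by end_near.
Qed.

End nneg_cvg.

Section covering_measure.
Context {R : realType} {X : metricType R} (xi : nat -> set X -> R).
Hypothesis xiP : fa_outer_prob_seq xi.
Implicit Types (K Y : set X) (r : R).
Local Open Scope ereal_scope.

Lemma nu_r_ge0 r Y : 0 <= nu_r xi r Y.
Proof.
apply: le_ereal_inf_tmp => _ [I _ <-].
by apply: nneseries_ge0 => n _ _; exact: tau_ge0.
Qed.

Lemma nu_eq0P Y : nu xi Y = 0 <-> forall r, (0 < r)%R -> nu_r xi r Y <= 0.
Proof.
split=> [nu0 r r0|nur0].
  by rewrite -nu0; apply: ereal_sup_ubound; exists r.
apply/eqP; rewrite eq_le; apply/andP; split.
  by apply: ge_ereal_sup => _ [r r0 <-]; exact: nur0.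
apply: le_ereal_sup_tmp; exists (nu_r xi 1 Y); last exact: nu_r_ge0.
by exists 1%R => //=; exact: ltr01.
Qed.

Lemma nu_r_le_sum_cover (S : seq (set X)) r Y :
  (forall A, A \in S -> open A /\ diam_le A r) ->
  Y `<=` \bigcup_(A in [set` S]) A ->
  nu_r xi r Y <= \sum_(A <- S) tau xi A.
Proof.
move=> Sadm YS; pose C k := nth set0 S k.
have C_tail k : (size S <= k)%N -> C k = set0.
  by move=> Sk; rewrite /C nth_default.
apply: le_trans (_ : \sum_(k <oo) tau xi (C k) <= _).
  apply: ereal_inf_lbound; exists C => //; split.
    move=> k; have [kS|/C_tail->] := ltnP k (size S); first exact/Sadm/mem_nth.
    by split=> [|x y []]; exact: open0.
  by move=> y /YS[A SA Ay]; exists (index A S) => //; rewrite /C nth_index.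
rewrite (nneseries_split 0 (size S)); last by move=> k _; exact: tau_ge0.
rewrite eseries0 ?adde0 => [|k Sk _]; last by rewrite C_tail// tau0.
by rewrite (big_nth set0) add0n.
Qed.

Lemma tau_Beps_cvg0 K : compact K -> nu xi K = 0 ->
  tau xi (Beps K eps) @[eps --> 0^'+] --> 0.
Proof.
move=> cK /nu_eq0P/(_ 1%R ltr01) nu1.
apply/nneg_cvge0P => [eps|e e0]; first exact: tau_ge0.
have /ereal_inf_lt[_ [I [Iadm KI] <-] Ie] : nu_r xi 1 K < e%:E.
  by apply: le_lt_trans nu1 _; rewrite lte_fin.
have Io i : open (I i) by case: (Iadm i).
have [N KIN] := compact_prefix_cover cK Io KI.
have IN_open : open (\bigcup_(i < N) I i) by apply: bigcup_open.
apply: filterS (near_Beps_subset cK IN_open KIN) => eps BIN.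
apply: le_trans (le_tau xiP BIN) _; apply: le_trans (tau_bigcup_le xiP I N) _.
apply/ltW/(le_lt_trans _ Ie); rewrite -(big_mkord xpredT (tau xi \o I)).
by apply: nneseries_lim_ge => n _ _; exact: tau_ge0.
Qed.

Lemma nu_eq0_tau_Beps_cvg0 K : compact K ->
  tau xi (Beps K eps) @[eps --> 0^'+] --> 0 -> nu xi K = 0.
Proof.
move=> cK /nneg_cvge0P-/(_ (fun _ => tau_ge0 xiP _)) Bcvg.
apply/nu_eq0P => r r0; apply/lee_addgt0Pr => e e0; rewrite add0e.
have [s Ks] := compact_ball_net cK (divr_gt0 r0 (ltr0Sn _ 1)).
pose d := (e / (size s).+1%:R)%R.
have d0 : (0 < d)%R by rewrite divr_gt0.
near (0%R : R)^'+ => eps.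
pose J c := ball c (r / 2) `&` Beps K eps.
apply: le_trans (_ : \sum_(A <- map J s) tau xi A <= _).
  apply: nu_r_le_sum_cover => [_ /mapP[c _ ->]|x Kx].
    split; first by apply: openI; [exact: open_ball|exact: open_Beps].
    by move=> x y [cx _] [cy _]; exact: (diam_le_ball c r x y cx cy).
  have [c sc cx] := Ks x Kx; exists (J c); first exact: map_f.
  split=> //; exists x => //; rewrite mdistxx.
  by near: eps; exact: nbhs_right_gt.
rewrite big_map; apply: le_trans (_ : \sum_(c <- s) d%:E <= _).
  apply: lee_sum => c _; apply: le_trans (le_tau xiP (@subIsetr _ _ _)) _.
  by near: eps; exact: Bcvg.
rewrite sumEFin lee_fin big_const_seq count_predT iter_addr_0.
by rewrite -mulr_natr /d mulrAC ler_pdivrMr ?ltr0Sn// ler_pM2l// ler_nat.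
Unshelve. all: by end_near.
Qed.

End covering_measure.

Theorem mainTheorem10 (R : realType) (X : metricType R)
  (xi : nat -> set X -> R) (K : set X) :
  compact [set: X] ->
  fa_outer_prob_seq xi ->
  compact K ->
  (eta_restr xi K = 0%E <->
   (fun eps : R => tau xi (Beps K eps)) @ 0^'+ --> 0%E).
Proof.
move=> _ xiP cK; split; first exact: tau_Beps_cvg0.
exact: nu_eq0_tau_Beps_cvg0.
Qed.
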